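(* Let $p$ be a prime, $t\ge 1$, and let $(K_n,\alpha)$ be an edge-labeled complete graph over $\mathbb{Z}/p^t\mathbb{Z}$ with ordered edge labels $p^{i_1},\dots,p^{i_{r_n}}$. (1) If $p^{i_{r_n}}\mid\cdots\mid p^{i_2}\mid p^{i_1}\mid p^t$ with $i_{r_n}\ge1$ and $i_1<t$, then the set consisting of $(1,\dots,1)$ and, for $j=2,\dots,n$, the vector with $p^{i_{r_{j-1}+1}}$ at $v_j$ and $0$ elsewhere, is a minimum flow-up generating set of $[\mathbb{Z}/p^t\mathbb{Z}]_{(K_n,\alpha)}$; thus the rank is $n$. (2) If $p^{i_1}\mid p^{i_2}\mid\cdots\mid p^{i_{r_n}}\mid p^t$ with $i_1\ge1$ and $i_{r_n}<t$, then the set consisting of $(1,\dots,1)$ and, for $j=2,\dots,n$, the vector with entries $p^{i_{r_n-(n-j)}}$ at $v_j,\dots,v_n$ and $0$ at $v_1,\dots,v_{j-1}$, is a minimum flow-up generating set of $[\mathbb{Z}/p^t\mathbb{Z}]_{(K_n,\alpha)}$; thus the rank is $n$.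
   Context: A spline on an edge-labeled graph $(G,\alpha)$ over $\mathbb{Z}/m\mathbb{Z}$ (edges labeled by nonzero ideals) is a vector $(f_{v_1},\dots,f_{v_n})\in(\mathbb{Z}/m\mathbb{Z})^n$ with $f_{v_i}-f_{v_j}\in\alpha(v_iv_j)$ for every edge; the splines form a $\mathbb{Z}$-module $[\mathbb{Z}/m\mathbb{Z}]_{(G,\alpha)}$. An $i$-th flow-up class is a spline with $f_{v_i}\ne0$ and $f_{v_t}=0$ for $t<i$. A minimum flow-up generating set is a generating set of the $\mathbb{Z}$-module of smallest possible size (the rank) consisting of flow-up classes. $K_n$ is the complete graph on $v_1,\dots,v_n$; $r_k=k(k-1)/2$; for $1\le j<k\le n$ the edge $v_jv_k$ is $e_{r_{k-1}+j}$. ''Ordered edge labels $l_1,\dots,l_{r_n}$'' means $\alpha(e_s)$ is the ideal generated by $l_s+m\mathbb{Z}$. *)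

From HB Require Import structures.
From mathcomp Require Import all_boot all_order all_algebra.
Set Implicit Arguments. Unset Strict Implicit. Unset Printing Implicit Defensive.
Import Order.TTheory GRing.Theory Num.Theory.
Local Open Scope ring_scope.

Definition rr (k : nat) : nat := ((k * (k - 1)) %/ 2)%N.

(* Vertices v_1..v_n are represented by j : 'I_n (v_{j+1}).
   For 0-indexed j < k, the edge v_{j+1} v_{k+1} is e_{r_k + (j+1)}. *)
Definition edge_index (j k : nat) : nat := (rr k + j.+1)%N.

Definition in_ideal (m : nat) (l x : 'Z_m) : Prop := exists y : 'Z_m, x = y * l.

Definition is_spline (m n : nat) (lab : nat -> 'Z_m) (f : {ffun 'I_n -> 'Z_m}) : Prop :=
  forall j k : 'I_n, (j < k)%N -> in_ideal (lab (edge_index j k)) (f j - f k).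

Definition is_flowup (m n : nat) (f : {ffun 'I_n -> 'Z_m}) : Prop :=
  exists i : 'I_n, f i != 0 /\ forall k : 'I_n, (k < i)%N -> f k = 0.

Definition in_Zspan (m n : nat) (S : {set {ffun 'I_n -> 'Z_m}}) (f : {ffun 'I_n -> 'Z_m}) : Prop :=
  exists c : {ffun 'I_n -> 'Z_m} -> int, f = \sum_(g in S) g *~ c g.

Definition spline_gen_set (m n : nat) (lab : nat -> 'Z_m) (S : {set {ffun 'I_n -> 'Z_m}}) : Prop :=
  (forall g, g \in S -> is_spline lab g) /\
  (forall f, is_spline lab f -> in_Zspan S f).

Definition min_flowup_gen_set (m n : nat) (lab : nat -> 'Z_m) (S : {set {ffun 'I_n -> 'Z_m}}) : Prop :=
  [/\ spline_gen_set lab S,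
      (forall g, g \in S -> is_flowup g) &
      (forall T : {set {ffun 'I_n -> 'Z_m}}, spline_gen_set lab T -> (#|S| <= #|T|)%N)].

Definition plabels (p t : nat) (i : nat -> nat) : nat -> 'Z_(p ^ t) :=
  fun s => ((p ^ i s)%N)%:R.

Definition ones_vec (m n : nat) : {ffun 'I_n -> 'Z_m} := [ffun=> 1].

(* part (1): p^{i_{r_{j-1}+1}} at v_j (1-indexed j), 0 elsewhere *)
Definition gen1 (p t n : nat) (i : nat -> nat) (j : 'I_n) : {ffun 'I_n -> 'Z_(p ^ t)} :=
  [ffun k : 'I_n => if k == j then ((p ^ i (rr j + 1))%N)%:R else 0].

(* part (2): p^{i_{r_n-(n-j)}} at v_j..v_n (1-indexed j), 0 at v_1..v_{j-1} *)
Definition gen2 (p t n : nat) (i : nat -> nat) (j : 'I_n) : {ffun 'I_n -> 'Z_(p ^ t)} :=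
  [ffun k : 'I_n => if (j <= k)%N then ((p ^ i (rr n - (n - j.+1)))%N)%:R else 0].

Definition genset1 (p t n : nat) (i : nat -> nat) : {set {ffun 'I_n -> 'Z_(p ^ t)}} :=
  ones_vec _ n |: [set gen1 p t i j | j : 'I_n & (0 < j)%N].

Definition genset2 (p t n : nat) (i : nat -> nat) : {set {ffun 'I_n -> 'Z_(p ^ t)}} :=
  ones_vec _ n |: [set gen2 p t i j | j : 'I_n & (0 < j)%N].

From HB Require Import structures.
From mathcomp Require Import all_boot all_order all_algebra zify.
Set Implicit Arguments. Unset Strict Implicit. Unset Printing Implicit Defensive.
Import Order.TTheory GRing.Theory Num.Theory.
Local Open Scope ring_scope.

(* Give every vertex v_k, k > 1, a parent: v_1 in case (1), v_(k-1) in case (2).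
   A spline is determined by its differences along the parent edges, and the
   spline conditions put the difference at v_k in the ideal of a single label
   p^(e_k), that of v_1 v_k in (1) and of v_(k-1) v_n in (2).  The k-th listed
   generator has difference p^(e_k) at v_k and 0 at every other vertex, and the
   divisibility hypotheses make it a spline, so the generators form a
   triangular Z-basis of the splines.  For minimality, the e_k-th base-p digit
   of the difference at v_k is additive on splines; this maps the splines onto
   F_p^n, and the image of a generating set spans F_p^n, so it has at least n
   elements. *)

Section Ideals.
Variable m : nat.
Implicit Types l x y : 'Z_m.

Lemma in_ideal0 l : in_ideal l 0.
Proof. by exists 0; rewrite mul0r. Qed.

Lemma in_idealN l x : in_ideal l x -> in_ideal l (- x).
Proof. by case=> y ->; exists (- y); rewrite mulNr. Qed.

Lemma in_idealD l x y : in_ideal l x -> in_ideal l y -> in_ideal l (x + y).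
Proof. by case=> a -> [b ->]; exists (a + b); rewrite mulrDl. Qed.

Lemma in_ideal_trans l l' x : in_ideal l' l -> in_ideal l x -> in_ideal l' x.
Proof. by case=> a -> [b ->]; exists (b * a); rewrite mulrA. Qed.

Lemma in_ideal_natr_dvd a b : (a %| b)%N -> in_ideal a%:R (b%:R : 'Z_m).
Proof. by move/dvdnP=> [c ->]; exists c%:R; rewrite natrM. Qed.

End Ideals.

Section Splines.
Variables (m n : nat) (lab : nat -> 'Z_m).
Implicit Types f g : {ffun 'I_n -> 'Z_m}.

Lemma spline0 : is_spline lab (0 : {ffun 'I_n -> 'Z_m}).
Proof. by move=> j k _; rewrite !ffunE subrr; apply: in_ideal0. Qed.

Lemma splineD f g : is_spline lab f -> is_spline lab g -> is_spline lab (f + g).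
Proof.
by move=> sf sg j k jk; rewrite !ffunE opprD addrACA; apply: in_idealD; [apply: sf | apply: sg].
Qed.

Lemma splineN f : is_spline lab f -> is_spline lab (- f).
Proof. by move=> sf j k jk; rewrite !ffunE -opprD; apply/in_idealN/sf. Qed.

Lemma splineMn f k : is_spline lab f -> is_spline lab (f *+ k).
Proof.
move=> sf; elim: k => [|k IHk]; first by rewrite mulr0n; apply: spline0.
by rewrite mulrS; apply: splineD.
Qed.

End Splines.

Section PrimePowerModulus.
Variables (p t : nat).
Hypotheses (p_prime : prime p) (t_gt0 : (0 < t)%N).

Lemma pexp_gt1 : (1 < p ^ t)%N.
Proof. by rewrite -(expn0 p) ltn_exp2l ?prime_gt1. Qed.

Lemma val_Zpexp_nat k : (k%:R : 'Z_(p ^ t)) = (k %% p ^ t)%N :> nat.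
Proof. by rewrite val_Zp_nat // pexp_gt1. Qed.

Lemma pexp_neq0 a : (a < t)%N -> (p ^ a)%N%:R != 0 :> 'Z_(p ^ t).
Proof.
move=> a_lt_t; apply/eqP=> /(congr1 val).
rewrite /= val_Zpexp_nat modn_small ?ltn_exp2l ?prime_gt1 //.
by move/eqP; rewrite expn_eq0 eqn0Ngt prime_gt0.
Qed.

Lemma in_ideal_pexp_dvd a (x : 'Z_(p ^ t)) :
  (a <= t)%N -> in_ideal (p ^ a)%N%:R x -> (p ^ a %| x)%N.
Proof.
move=> a_le_t [y ->]; rewrite -[y]natr_Zp -natrM val_Zpexp_nat.
by rewrite /dvdn modn_dvdm ?dvdn_exp2l // modnMl.
Qed.

Definition pdigit a (x : 'Z_(p ^ t)) : 'F_p := (x %/ p ^ a)%N%:R.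

Lemma pdigit_pexpM a u : (a < t)%N -> pdigit a (p ^ a * u)%N%:R = u%:R.
Proof.
move=> a_lt_t; rewrite /pdigit val_Zpexp_nat -(subnKC (ltnW a_lt_t)) expnD.
rewrite -muln_modr mulKn ?expn_gt0 ?prime_gt0 // -Fp_nat_mod // modn_dvdm ?Fp_nat_mod //.
by rewrite -{1}(expn1 p) dvdn_exp2l // subn_gt0.
Qed.

Lemma pdigitD a x y : (a < t)%N -> in_ideal (p ^ a)%N%:R x -> in_ideal (p ^ a)%N%:R y ->
  pdigit a (x + y) = pdigit a x + pdigit a y.
Proof.
move=> a_lt_t [u ->] [v ->]; rewrite -[u]natr_Zp -[v]natr_Zp -!natrM -natrD -mulnDl.
by rewrite ![(_ * p ^ a)%N]mulnC !pdigit_pexpM // natrD.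
Qed.

End PrimePowerModulus.

Section GeneratorCount.
Variables (m n : nat) (F : fieldType) (W : vectType F).
Local Notation V := {ffun 'I_n -> 'Z_m}.
Variables (P : V -> Prop) (phi : V -> W).
Hypotheses (P0 : P 0) (PD : forall f g, P f -> P g -> P (f + g))
  (PN : forall f, P f -> P (- f))
  (phiD : forall f g, P f -> P g -> phi (f + g) = phi f + phi g)
  (phi_onto : forall w, exists2 f, P f & phi f = w).

Lemma additive_on0 : phi 0 = 0.
Proof. by apply/(addrI (phi 0)); rewrite -phiD // !addr0. Qed.

Lemma additive_on_Mz f z : P f -> P (f *~ z) /\ phi (f *~ z) = phi f *~ z.
Proof.
have phiMn k : P f -> P (f *+ k) /\ phi (f *+ k) = phi f *+ k.
  move=> Pf; elim: k => [|k [Pfk phifk]]; first by rewrite !mulr0n additive_on0.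
  by rewrite !mulrS phiD // phifk; split; first exact: PD.
move=> Pf; case: z => k; first exact: phiMn.
have [Pfk phifk] := phiMn k.+1 Pf.
rewrite NegzE !mulrNz -!pmulrn; split; first exact: PN.
by apply/eqP; rewrite -addr_eq0 -phifk -phiD ?addNr ?additive_on0 //; apply: PN.
Qed.

(* A Z-generating set of [P] maps onto an F-spanning set of [W]. *)
Lemma dim_le_card_Zspan (T : {set V}) :
  (forall g, g \in T -> P g) -> (forall f, P f -> in_Zspan T f) -> (\dim {:W} <= #|T|)%N.
Proof.
move=> PT spanT.
have /dimvS : (fullv <= <<[seq phi g | g <- enum T]>>)%VS.
  apply/subvP=> w _; have [f Pf <-] := phi_onto w; have [c ->] := spanT f Pf.
  have [_ ->] : P (\sum_(g in T) g *~ c g) /\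
                phi (\sum_(g in T) g *~ c g) = \sum_(g in T) phi g *~ c g.
    apply: (big_ind2 (fun f w => P f /\ phi f = w)) => [|f1 w1 f2 w2 [Pf1 <-] [Pf2 <-]|g /PT].
    - by split; last exact: additive_on0.
    - by split; [apply: PD | apply: phiD].
    - exact: additive_on_Mz.
  apply: rpred_sum => g gT; rewrite -scaler_int.
  by apply/rpredZ/memv_span/map_f; rewrite mem_enum.
by move/leq_trans/(_ (dim_span _)); rewrite size_map -cardE.
Qed.

End GeneratorCount.

Lemma in_Zspan_imset m n (G : 'I_n -> {ffun 'I_n -> 'Z_m}) (c : 'I_n -> int) :
  injective G -> in_Zspan (G @: setT) (\sum_j G j *~ c j).
Proof.
move=> G_inj; exists (fun g => if [pick j | G j == g] is Some j then c j else 0).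
rewrite big_imset //=; last by move=> ? ? _ _; apply: G_inj.
apply: eq_big => [j|j _]; first by rewrite inE.
by case: pickP => [k /eqP/G_inj -> //|/(_ j)]; rewrite eqxx.
Qed.

Section FlowupBasis.
Variables (p t n : nat) (lab : nat -> 'Z_(p ^ t)).
Hypotheses (p_prime : prime p) (t_gt0 : (0 < t)%N).
Local Notation V := {ffun 'I_n -> 'Z_(p ^ t)}.
Variable par : 'I_n -> 'I_n.
Hypothesis par_lt : forall k : 'I_n, (0 < k)%N -> (par k < k)%N.

(* [par 0] is irrelevant: at the root [dpar] is the value itself. *)
Definition dpar (k : 'I_n) (f : V) : 'Z_(p ^ t) :=
  f k - (if nat_of_ord k == 0%N then 0 else f (par k)).

Fact dpar_is_zmod_morphism k : zmod_morphism (dpar k).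
Proof.
move=> f g; rewrite /dpar !ffunE; case: ifP => _; first by rewrite !subr0.
by rewrite !opprD !opprK addrACA.
Qed.

HB.instance Definition _ k :=
  GRing.isZmodMorphism.Build V 'Z_(p ^ t) (dpar k) (dpar_is_zmod_morphism k).

Lemma dpar_eq0 (j : nat) (f : V) : (forall k : 'I_n, (k < j)%N -> dpar k f = 0) ->
  forall k : 'I_n, (k < j)%N -> f k = 0.
Proof.
move=> df k; have [N] := ubnP k; elim: N k => // N IHN k kN kj.
have := df k kj; rewrite /dpar; case: eqP => [_|/eqP k0]; first by rewrite subr0.
have := @par_lt k; rewrite lt0n k0 => /(_ isT) park.
by rewrite (IHN (par k)) ?subr0 //; lia.
Qed.

Lemma dpar_inj (f g : V) : (forall k, dpar k f = dpar k g) -> f = g.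
Proof.
move=> dfg; apply/eqP; rewrite -subr_eq0; apply/eqP/ffunP=> k.
rewrite [RHS]ffunE; apply: (@dpar_eq0 n) (ltn_ord k) => j _.
by rewrite raddfB /= dfg subrr.
Qed.

Variables (e : 'I_n -> nat) (G : 'I_n -> V).
Hypotheses (e_lt : forall k, (e k < t)%N)
  (dpar_G : forall j k, dpar k (G j) = if k == j then (p ^ e k)%N%:R else 0)
  (G_spline : forall j, is_spline lab (G j))
  (spline_dpar : forall f k, is_spline lab f -> in_ideal (p ^ e k)%N%:R (dpar k f)).

Lemma dpar_sumG (c : 'I_n -> nat) k : dpar k (\sum_j G j *+ c j) = (p ^ e k * c k)%N%:R.
Proof.
rewrite raddf_sum (bigD1 k) //= big1 => [|j /negPf jk].
  by rewrite raddfMn /= dpar_G eqxx natrM mulr_natr addr0.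
by rewrite raddfMn /= dpar_G eq_sym jk mul0rn.
Qed.

Lemma spline_decomp f : is_spline lab f -> f = \sum_j G j *+ (dpar j f %/ p ^ e j)%N.
Proof.
move=> sf; apply: dpar_inj => k; rewrite dpar_sumG mulnC divnK ?natr_Zp //.
exact/(in_ideal_pexp_dvd p_prime t_gt0 (ltnW (e_lt k)))/spline_dpar.
Qed.

Lemma G_lt0 (j k : 'I_n) : (k < j)%N -> G j k = 0.
Proof.
apply: dpar_eq0 => {}k kj; rewrite dpar_G; case: eqP => // kj'.
by rewrite kj' ltnn in kj.
Qed.

Lemma G_diag j : G j j = (p ^ e j)%N%:R.
Proof.
have := dpar_G j j; rewrite /dpar eqxx; case: eqP => [_|/eqP j0]; first by rewrite subr0.
by rewrite (@G_lt0 j (par j)) ?subr0 // par_lt // lt0n.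
Qed.

Lemma G_flowup j : is_flowup (G j).
Proof.
by exists j; split=> [|k]; [rewrite G_diag pexp_neq0 | apply: G_lt0].
Qed.

Lemma G_inj : injective G.
Proof.
move=> j k Gjk; have := dpar_G k j; rewrite -Gjk dpar_G eqxx.
by case: eqP => // _ /eqP; rewrite (negPf (pexp_neq0 p_prime t_gt0 (e_lt j))).
Qed.

Lemma G_generate f : is_spline lab f -> in_Zspan (G @: setT) f.
Proof.
move=> /spline_decomp ->; under eq_bigr do rewrite pmulrn.
exact: in_Zspan_imset G_inj.
Qed.

Lemma card_spline_gen_set (T : {set V}) : spline_gen_set lab T -> (n <= #|T|)%N.
Proof.
move=> [T_spline T_span].
pose phi (f : V) : 'rV['F_p]_n := \row_k pdigit (e k) (dpar k f).
suff : (\dim {:'rV['F_p]_n} <= #|T|)%N by rewrite dimvf dim_matrix mul1r.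
apply: (@dim_le_card_Zspan _ _ _ _ (is_spline lab) phi) => //.
- exact: spline0.
- exact: splineD.
- exact: splineN.
- move=> f g sf sg; apply/rowP=> k; rewrite !mxE raddfD pdigitD //; exact: spline_dpar.
- move=> w; exists (\sum_j G j *+ w 0 j).
    by apply: big_ind => [|f g|j _]; [apply: spline0 | apply: splineD | apply: splineMn].
  by apply/rowP=> k; rewrite mxE dpar_sumG pdigit_pexpM // natr_Zp.
Qed.

Theorem flowup_basis_min : min_flowup_gen_set lab (G @: setT) /\ #|G @: setT| = n.
Proof.
have card_G : #|G @: setT| = n by rewrite card_imset ?cardsT ?card_ord //; apply: G_inj.
split=> //; split=> [| g /imsetP[j _ ->] | T /card_spline_gen_set]; last by rewrite card_G.
- by split=> [g /imsetP[j _ ->] //|]; apply: G_generate.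
- exact: G_flowup.
Qed.

End FlowupBasis.

Lemma rrE k : rr k = 'C(k, 2).
Proof. by rewrite /rr bin2 -divn2 subn1. Qed.

Lemma rrS k : rr k.+1 = (rr k + k)%N.
Proof. by rewrite !rrE binS bin1 addnC. Qed.

Lemma leq_rr a b : (a <= b)%N -> (rr a <= rr b)%N.
Proof. by rewrite !rrE; apply: leq_bin2l. Qed.

Lemma edge_index_le_rr (a b n : nat) : (a < b < n)%N -> (0 < edge_index a b <= rr n)%N.
Proof. by case/andP=> ab /leq_rr; rewrite rrS /edge_index; lia. Qed.

Lemma chain_homo (r : rel nat) (f : nat -> nat) N : reflexive r -> transitive r ->
  (forall s, (0 < s < N)%N -> r (f s) (f s.+1)) ->
  forall s s', (0 < s)%N -> (s <= s' <= N)%N -> r (f s) (f s').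
Proof.
move=> r_refl r_trans r_step s s' s_gt0 /andP[ss' s'N].
have := @homo_leq_in _ [pred k | 0 < k <= N]%N f r r_refl r_trans.
apply=> //; rewrite ?inE /=; try lia.
- by move=> a b /andP[a0 aN] /andP[b0 bN] k /andP[ak kb]; apply/andP; lia.
- by move=> k /andP[k0 kN] /andP[_ kN']; apply: r_step; lia.
Qed.

Lemma setU1_imset_pos (T : finType) n (a : T) (h : 'I_n -> T) : (0 < n)%N ->
  a |: [set h j | j : 'I_n & (0 < j)%N] =
  [set (if nat_of_ord j == 0%N then a else h j) | j in [set: 'I_n]].
Proof.
move=> n_gt0; apply/setP=> x; rewrite in_setU1; apply/idP/imsetP.
- case/orP=> [/eqP ->|/imsetP[j]]; first by exists (Ordinal n_gt0).
  by rewrite inE lt0n => /negPf j0 ->; exists j; rewrite ?j0.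
- case=> j _ -> /=; have [j0|j0] := eqVneq (nat_of_ord j) 0%N; first by rewrite eqxx.
  by apply/orP; right; apply/imsetP; exists j; rewrite // inE lt0n.
Qed.

Section DecreasingLabels.
Variables (p t n : nat) (i : nat -> nat).
Hypotheses (p_prime : prime p) (t_gt0 : (0 < t)%N) (n_gt0 : (0 < n)%N)
  (i_dvd : forall s, (1 <= s < rr n)%N -> (p ^ i s.+1 %| p ^ i s)%N) (i1_lt : (i 1 < t)%N).

Lemma plabel_dvd_dec s s' : (0 < s)%N -> (s <= s' <= rr n)%N -> (p ^ i s' %| p ^ i s)%N.
Proof.
move=> s_gt0 ss'.
apply: (@chain_homo (fun a b => b %| a)%N (fun s => p ^ i s)%N (rr n) _ _ _ s s' s_gt0 ss').
- exact: dvdnn.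
- by move=> b a c /= ba cb; apply: dvdn_trans cb ba.
- exact: i_dvd.
Qed.

Definition root1 : 'I_n := Ordinal n_gt0.
Definition e1 (j : 'I_n) : nat := if nat_of_ord j == 0%N then 0 else i (rr j + 1).
Definition G1 (j : 'I_n) : {ffun 'I_n -> 'Z_(p ^ t)} :=
  if nat_of_ord j == 0%N then ones_vec _ n else gen1 p t i j.

Lemma e1_lt j : (e1 j < t)%N.
Proof.
rewrite /e1; case: eqP => [_ //|/eqP j0]; apply: leq_ltn_trans i1_lt.
have /andP[_ j_le] : (0 < edge_index 0 j <= rr n)%N.
  by apply: edge_index_le_rr; rewrite lt0n j0 ltn_ord.
rewrite -(dvdn_Pexp2l _ _ (prime_gt1 p_prime)); apply: plabel_dvd_dec => //.
by move: j_le; rewrite /edge_index; lia.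
Qed.

Lemma dpar_G1 j k :
  dpar (fun=> root1) k (G1 j) = if k == j then (p ^ e1 k)%N%:R else 0.
Proof.
rewrite /dpar /G1 /e1 /gen1 /ones_vec -!val_eqE /=.
case: (eqVneq (nat_of_ord j) 0%N) => j0; case: (eqVneq (nat_of_ord k) 0%N) => k0;
  rewrite !ffunE -?val_eqE /= ?j0 ?k0 ?eqxx ?expn0 ?subr0 ?subrr //.
- by rewrite (negPf k0).
- by rewrite eq_sym in j0; rewrite (negPf j0).
- by rewrite eq_sym in j0; rewrite (negPf j0) subr0; case: eqP => [->|].
Qed.

Lemma spline_G1 j : is_spline (plabels p t i) (G1 j).
Proof.
move=> a b ab; rewrite /G1 /ones_vec /gen1 /plabels.
case: eqP => [_|/eqP j0]; rewrite !ffunE; first by rewrite subrr; apply: in_ideal0.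
have /andP[_ ab_le] : (0 < edge_index a b <= rr n)%N by apply: edge_index_le_rr; rewrite ab ltn_ord.
have dvd_label s : (rr j + 1 <= s <= rr n)%N ->
    in_ideal (p ^ i s)%N%:R ((p ^ i (rr j + 1))%N%:R : 'Z_(p ^ t)).
  by move=> s_range; apply: in_ideal_natr_dvd; apply: plabel_dvd_dec s_range; rewrite addn1.
case: (eqVneq a j) => [aj|aj]; case: (eqVneq b j) => [bj|bj].
- by move: ab; rewrite aj bj ltnn.
- move: ab ab_le; rewrite aj subr0 => jb jb_le; apply: dvd_label.
  have := leq_rr jb; rewrite rrS.
  by move: jb_le; rewrite /edge_index; lia.
- rewrite sub0r; apply/in_idealN/dvd_label.
  by move: ab_le; rewrite bj /edge_index; lia.
- by rewrite subrr; apply: in_ideal0.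
Qed.

Lemma spline_dpar1 f k : is_spline (plabels p t i) f ->
  in_ideal (p ^ e1 k)%N%:R (dpar (fun=> root1) k f).
Proof.
move=> sf; rewrite /dpar /e1; case: eqP => [_|/eqP k0].
  by exists (f k - 0); rewrite expn0 mulr1.
by rewrite -opprB; apply/in_idealN/(sf root1); rewrite /= lt0n.
Qed.

Theorem genset1_min :
  min_flowup_gen_set (plabels p t i) (genset1 p t n i) /\ #|genset1 p t n i| = n.
Proof.
rewrite /genset1 setU1_imset_pos //.
apply: (flowup_basis_min p_prime t_gt0 _ e1_lt dpar_G1 spline_G1 spline_dpar1).
by move=> k; rewrite lt0n.
Qed.

End DecreasingLabels.

Section IncreasingLabels.
Variables (p t n : nat) (i : nat -> nat).
Hypotheses (p_prime : prime p) (t_gt0 : (0 < t)%N) (n_gt0 : (0 < n)%N)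
  (i_dvd : forall s, (1 <= s < rr n)%N -> (p ^ i s %| p ^ i s.+1)%N)
  (i_rrn_lt : (i (rr n) < t)%N).

Lemma plabel_dvd_inc s s' : (0 < s)%N -> (s <= s' <= rr n)%N -> (p ^ i s %| p ^ i s')%N.
Proof.
move=> s_gt0 ss'.
apply: (@chain_homo dvdn (fun s => p ^ i s)%N (rr n) _ _ _ s s' s_gt0 ss').
- exact: dvdnn.
- by move=> b a c; apply: dvdn_trans.
- exact: i_dvd.
Qed.

Lemma rr_pred : rr n = (rr n.-1 + n.-1)%N.
Proof. by rewrite -rrS prednK. Qed.

Lemma rr_sub j : (j < n)%N -> (rr n - (n - j.+1) = rr n.-1 + j)%N.
Proof. by have := rr_pred; lia. Qed.

Lemma edge_index_le_last a b j : (a < j <= b)%N -> (b < n)%N ->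
  (edge_index a b <= rr n.-1 + j)%N.
Proof.
move=> /andP[aj jb] bn; rewrite /edge_index.
case: (ltnP b.+1 n) => [bn1|nb]; last by rewrite (_ : b = n.-1); lia.
by have := @leq_rr b.+1 n.-1; rewrite rrS; lia.
Qed.

Definition par2 (j : 'I_n) : 'I_n := Ordinal (leq_ltn_trans (leq_pred j) (ltn_ord j)).
Definition e2 (j : 'I_n) : nat := if nat_of_ord j == 0%N then 0 else i (rr n - (n - j.+1)).
Definition G2 (j : 'I_n) : {ffun 'I_n -> 'Z_(p ^ t)} :=
  if nat_of_ord j == 0%N then ones_vec _ n else gen2 p t i j.

Lemma e2_lt j : (e2 j < t)%N.
Proof.
rewrite /e2; case: eqP => [_ //|/eqP j0]; apply: leq_ltn_trans i_rrn_lt.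
rewrite rr_sub // -(dvdn_Pexp2l _ _ (prime_gt1 p_prime)); apply: plabel_dvd_inc.
  by move: j0; lia.
by have := rr_sub (ltn_ord j); lia.
Qed.

Lemma dpar_G2 j k : dpar par2 k (G2 j) = if k == j then (p ^ e2 k)%N%:R else 0.
Proof.
rewrite /dpar /G2 /e2 /gen2 /ones_vec -!val_eqE /=.
case: (eqVneq (nat_of_ord j) 0%N) => j0; case: (eqVneq (nat_of_ord k) 0%N) => k0;
  rewrite !ffunE -?val_eqE /= ?j0 ?k0 ?eqxx ?expn0 ?subr0 ?subrr //.
- by rewrite (negPf k0).
- by rewrite (_ : (j <= 0)%N = false) 1?(_ : (0 == j :> nat) = false) //; lia.
- case: (ltngtP k j) => kj.
  + by rewrite (_ : (j <= k.-1)%N = false) ?subrr //; lia.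
  + by rewrite (_ : (j <= k.-1)%N) ?subrr //; lia.
  + by rewrite (_ : (j <= k.-1)%N = false) ?subr0 ?kj //; lia.
Qed.

Lemma spline_G2 j : is_spline (plabels p t i) (G2 j).
Proof.
move=> a b ab; rewrite /G2 /ones_vec /gen2 /plabels.
case: eqP => [_|/eqP j0]; rewrite !ffunE; first by rewrite subrr; apply: in_ideal0.
case: (leqP j a) => ja; first by rewrite (leq_trans ja (ltnW ab)) subrr; apply: in_ideal0.
case: (leqP j b) => jb; last by rewrite subrr; apply: in_ideal0.
rewrite sub0r rr_sub //; apply/in_idealN/in_ideal_natr_dvd/plabel_dvd_inc.
  by rewrite /edge_index addnS.
by rewrite edge_index_le_last ?ja ?jb //=; have := rr_sub (ltn_ord j); lia.
Qed.

Lemma spline_dpar2 f k : is_spline (plabels p t i) f ->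
  in_ideal (p ^ e2 k)%N%:R (dpar par2 k f).
Proof.
move=> sf; rewrite /dpar /e2; case: eqP => [_|/eqP k0].
  by exists (f k - 0); rewrite expn0 mulr1.
have kn := ltn_ord k; rewrite rr_sub //.
have vn_lt : (n.-1 < n)%N by rewrite ltn_predL.
pose vn : 'I_n := Ordinal vn_lt.
have prev_last : in_ideal (plabels p t i (rr n.-1 + k)) (f (par2 k) - f vn).
  by have := sf (par2 k) vn; rewrite /edge_index /= prednK ?lt0n //; apply; lia.
have [k_lt|k_last] := ltnP k n.-1.
  have := sf k vn k_lt; rewrite /edge_index /= => k_last.
  have -> : f k - f (par2 k) = (f k - f vn) - (f (par2 k) - f vn).
    by rewrite opprB addrA subrK.
  apply: in_idealD (in_idealN prev_last).
  apply: in_ideal_trans k_last; apply: in_ideal_natr_dvd; apply: plabel_dvd_inc.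
    by move: k0; lia.
  by have := rr_pred; lia.
have -> : f k = f vn by congr (f _); apply: val_inj => /=; lia.
by rewrite -opprB; apply: in_idealN.
Qed.

Theorem genset2_min :
  min_flowup_gen_set (plabels p t i) (genset2 p t n i) /\ #|genset2 p t n i| = n.
Proof.
rewrite /genset2 setU1_imset_pos //.
apply: (flowup_basis_min p_prime t_gt0 _ e2_lt dpar_G2 spline_G2 spline_dpar2).
by move=> k; rewrite /= lt0n => k0; lia.
Qed.

End IncreasingLabels.

Local Close Scope ring_scope.
Unset Implicit Arguments.

Theorem mainTheorem8 (p t n : nat) (i : nat -> nat) :
  prime p -> (1 <= t)%N -> (2 <= n)%N ->
  (* (1) *)
  ((forall s, (1 <= s < rr n)%N -> (p ^ i s.+1 %| p ^ i s)%N) ->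
   (p ^ i 1 %| p ^ t)%N -> (1 <= i (rr n))%N -> (i 1 < t)%N ->
   min_flowup_gen_set (plabels p t i) (genset1 p t n i) /\ #|genset1 p t n i| = n)
  /\
  (* (2) *)
  ((forall s, (1 <= s < rr n)%N -> (p ^ i s %| p ^ i s.+1)%N) ->
   (p ^ i (rr n) %| p ^ t)%N -> (1 <= i 1)%N -> (i (rr n) < t)%N ->
   min_flowup_gen_set (plabels p t i) (genset2 p t n i) /\ #|genset2 p t n i| = n).
Proof.
move=> p_prime t_gt0 n_ge2; have n_gt0 : 0 < n by apply: ltnW.
by split=> i_dvd _ _ i_lt; [apply: genset1_min | apply: genset2_min].
Qed.
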